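(* Let $S\subset\mathbb{R}^d$ be a nonempty compact convex set with diameter $D:=\sup_{x,y\in S}\|x-y\|$, and let $f$ be differentiable on $S$ with $L$-Lipschitz gradient on $S$ (not necessarily convex). Let $G:=\sup_{x\in S}\|\nabla f(x)\|<\infty$, fix $C\ge\max\{LD^2,\,GD\}$ with $C>0$, and let $f^*:=\inf_{x\in S}f(x)$. Let $\delta\ge0$ and suppose that for every $x\in S$ a vector $g_\delta(x)\in\mathbb{R}^d$ is available with \[ \big|\langle \nabla f(x)-g_\delta(x),\,s-x\rangle\big|\le\delta\,\|\nabla f(x)\|\quad\text{for all } s\in S. \] Let $\mathcal G(x):=\max_{s\in S}\langle\nabla f(x),\,x-s\rangle$ (the Frank–Wolfe gap) and $\tilde{\mathcal G}(x):=\max_{s\in S}\langle g_\delta(x),\,x-s\rangle$. Given $x^0\in S$, define iterates for $k=0,1,2,\dots$ by choosing $s^k\in\arg\min_{s\in S}\langle g_\delta(x^k),\,s-x^k\rangle$, setting \[ \overline\alpha_k:=\frac{\big(\tilde{\mathcal G}(x^k)-\delta\|\nabla f(x^k)\|\big)_+}{C},\qquad x^{k+1}:=x^k+\overline\alpha_k(s^k-x^k), \] where $(u)_+:=\max\{u,0\}$. Then for every $K\ge0$, \[ \min_{0\le k\le K}\big(\mathcal G(x^k)-2\delta\|\nabla f(x^k)\|\big)_+\le\sqrt{\frac{2C\,(f(x^0)-f^* )}{K+1}}. \]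
   Context: $\|\cdot\|$ is the Euclidean norm and $\langle\cdot,\cdot\rangle$ the Euclidean inner product. *)

From HB Require Import structures.
From mathcomp Require Import all_boot all_order all_algebra.
From mathcomp Require Import all_classical all_reals all_analysis.
Set Implicit Arguments. Unset Strict Implicit. Unset Printing Implicit Defensive.
Import Order.TTheory GRing.Theory Num.Theory.
Import numFieldNormedType.Exports.
Local Open Scope classical_set_scope.
Local Open Scope ring_scope.

Definition dotp (R : realType) (d : nat) (u v : 'rV[R]_d) : R :=
  \sum_(i < d) u ord0 i * v ord0 i.

Definition enorm (R : realType) (d : nat) (u : 'rV[R]_d) : R :=
  Num.sqrt (dotp u u).

Definition grad (R : realType) (d : nat) (f : 'rV[R]_d -> R) (x : 'rV[R]_d)
  : 'rV[R]_d := \row_(i < d) ('D_(delta_mx ord0 i) f x).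

Definition posp (R : realType) (u : R) : R := Num.max u 0.

Definition diam (R : realType) (d : nat) (S : set 'rV[R]_d) : R :=
  sup [set enorm (x - y) | x in S & y in S].

Definition fw_gap (R : realType) (d : nat) (S : set 'rV[R]_d)
  (g : 'rV[R]_d -> 'rV[R]_d) (x : 'rV[R]_d) : R :=
  sup [set dotp (g x) (x - s) | s in S].

From HB Require Import structures.
From mathcomp Require Import all_boot all_order all_algebra.
From mathcomp Require Import all_classical all_reals all_analysis.
From mathcomp Require Import ring lra.
Import Order.TTheory GRing.Theory Num.Theory.
Import numFieldNormedType.Exports.
Local Open Scope classical_set_scope.
Local Open Scope ring_scope.
Set Implicit Arguments. Unset Strict Implicit.

(* Let gap~ be the Frank-Wolfe gap of the inexact oracle and
   a_k = (gap~(x^k) - delta |grad f(x^k)|)_+, so that x^{k+1} = x^k + (a_k / C) (s^k - x^k).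
   The oracle error bound gives
   <grad f(x^k), s^k - x^k> <= -(gap~(x^k) - delta |grad f(x^k)|);
   with C >= L D^2 the descent lemma then yields f(x^k) - f(x^{k+1}) >= a_k^2 / (2 C),
   and C >= G D keeps a_k / C <= 1, so the iterates stay in S.  Telescoping,
   sum_k a_k^2 <= 2 C (f(x^0) - inf_S f).  Finally a_k >= (gap(x^k) - 2 delta |grad f(x^k)|)_+
   since the exact and inexact gaps differ by at most delta |grad f(x^k)|, and a minimum is
   bounded by the quadratic mean. *)

Section InnerProduct.
Variables (R : realType) (d : nat).
Implicit Types (u v w : 'rV[R]_d).

Lemma dotpC u v : dotp u v = dotp v u.
Proof. by apply: eq_bigr => i _; rewrite mulrC. Qed.

Lemma dotpDl u v w : dotp (u + v) w = dotp u w + dotp v w.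
Proof. by rewrite /dotp -big_split; apply: eq_bigr => i _; rewrite mxE mulrDl. Qed.

Lemma dotpZl a u w : dotp (a *: u) w = a * dotp u w.
Proof. by rewrite /dotp mulr_sumr; apply: eq_bigr => i _; rewrite mxE mulrA. Qed.

Lemma dotpNl u w : dotp (- u) w = - dotp u w.
Proof. by rewrite -scaleN1r dotpZl mulN1r. Qed.

Lemma dotpBl u v w : dotp (u - v) w = dotp u w - dotp v w.
Proof. by rewrite dotpDl dotpNl. Qed.

Lemma dotpZr a u w : dotp w (a *: u) = a * dotp w u.
Proof. by rewrite dotpC dotpZl dotpC. Qed.

Lemma dotpNr u w : dotp w (- u) = - dotp w u.
Proof. by rewrite dotpC dotpNl dotpC. Qed.

Lemma dotpBr u v w : dotp w (u - v) = dotp w u - dotp w v.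
Proof. by rewrite dotpC dotpBl !(dotpC w). Qed.

Lemma dotp0r u : dotp u 0 = 0.
Proof. by rewrite /dotp big1 // => i _; rewrite mxE mulr0. Qed.

Lemma dotpp_ge0 u : 0 <= dotp u u.
Proof. by apply: sumr_ge0 => i _; rewrite -expr2 sqr_ge0. Qed.

Lemma dotpp_eq0 u : (dotp u u == 0) = (u == 0).
Proof.
apply/idP/eqP => [|->]; last by rewrite dotp0r.
rewrite psumr_eq0 => [/allP u0|i _]; last by rewrite -expr2 sqr_ge0.
apply/rowP => i; rewrite mxE.
by have := u0 i (mem_index_enum _); rewrite -expr2 sqrf_eq0 => /eqP.
Qed.

Lemma dotp_sqr_le u v : dotp u v ^+ 2 <= dotp u u * dotp v v.
Proof.
have [v0|vn0] := eqVneq v 0.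
  by rewrite v0 !dotp0r expr0n mulr0.
have vv_gt0 : 0 < dotp v v by rewrite lt_def dotpp_eq0 vn0 dotpp_ge0.
(* expand  0 <= |<v,v> u - <u,v> v|^2 = <v,v> (<u,u><v,v> - <u,v>^2) *)
have := dotpp_ge0 (dotp v v *: u - dotp u v *: v).
rewrite !(dotpBl, dotpBr, dotpZl, dotpZr) (dotpC v u) (mulrC (dotp v v) (dotp u v)).
by rewrite subrr mulr0 subr0 pmulr_rge0 // subr_ge0 expr2 (mulrC (dotp u u)).
Qed.

Lemma enorm_ge0 u : 0 <= enorm u.
Proof. exact: sqrtr_ge0. Qed.

Lemma enorm_sqr u : enorm u ^+ 2 = dotp u u.
Proof. by rewrite sqr_sqrtr // dotpp_ge0. Qed.

Lemma normr_dotp_le u v : `|dotp u v| <= enorm u * enorm v.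
Proof.
rewrite -ler_sqr ?nnegrE ?mulr_ge0 ?enorm_ge0 //.
by rewrite exprMn !enorm_sqr real_normK ?num_real // dotp_sqr_le.
Qed.

Lemma dotp_le u v : dotp u v <= enorm u * enorm v.
Proof. exact: le_trans (ler_norm _) (normr_dotp_le u v). Qed.

Lemma enormZ a u : enorm (a *: u) = `|a| * enorm u.
Proof.
rewrite /enorm dotpZl dotpZr mulrA sqrtrM; last by rewrite -expr2 sqr_ge0.
by rewrite -expr2 sqrtr_sqr.
Qed.

End InnerProduct.

Section Gradient.
Variables (R : realType) (d : nat).
Implicit Types (y w : 'rV[R]_d) (f : 'rV[R]_d -> R).

Lemma dotp_grad f y w : differentiable f y -> dotp (grad f y) w = 'D_w f y.
Proof.
move=> df; rewrite deriveE // {2}(row_sum_delta w) linear_sum /dotp.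
by apply: eq_bigr => i _; rewrite mxE deriveE // linearZ /= mulrC.
Qed.

Lemma is_derive_line f y w t : differentiable f (y + t *: w) ->
  is_derive t 1 (fun t => f (y + t *: w)) (dotp (grad f (y + t *: w)) w).
Proof.
move=> df.
have quotE : (fun h : R => h^-1 *: (((fun t => f (y + t *: w)) \o shift t) (h *: 1)
                                     - f (y + t *: w)))
  = (fun h => h^-1 *: ((f \o shift (y + t *: w)) (h *: w) - f (y + t *: w))).
  apply/funext => h /=; congr (_ *: (f _ - _)).
  by rewrite /shift /= scaler1 scalerDl addrCA addrA.
split; first by rewrite /derivable quotE; exact: diff_derivable.
by rewrite dotp_grad // /derive quotE.
Qed.

End Gradient.

Lemma convex_segment (R : realType) (d : nat) (S : set 'rV[R]_d) y z t :
  convex_set S -> S y -> S z -> 0 <= t <= 1 -> S (y + t *: (z - y)).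
Proof.
move=> cS Sy Sz /andP[t0 t1].
have := cS z y (Itv01 t0 t1); rewrite !in_setE => /(_ Sz Sy).
by congr S; rewrite /conv /= /unstable.onem scalerBl scale1r scalerBr addrCA.
Qed.

Lemma increment_le_of_deriv_le (R : realType) (h h' : R -> R) (c q : R) :
  (forall t : R, 0 <= t <= 1 -> is_derive t 1 h (h' t)) ->
  (forall t : R, 0 < t < 1 -> h' t <= c + q * t) ->
  h 1 <= h 0 + c + q / 2.
Proof.
move=> dh h'_le.
pose k := h - c \*: (@id R) - (q / 2) \*: ((@id R) * (@id R)).
have dk (t : R) : 0 <= t <= 1 -> is_derive t 1 k (h' t - c - q * t).
  move=> t01; have := is_deriveB (is_deriveB (dh t t01)
    (is_deriveZ c (is_derive_id t 1)))
    (is_deriveZ (q / 2) (is_deriveM (is_derive_id t 1) (is_derive_id t 1))).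
  move=> dkt; apply: is_derive_eq dkt _.
  have scaleE (a b : R) : a *: b = a * b by [].
  by rewrite !scaleE !mulr1; congr (_ - _); field.
have ck : {within `[0, 1], continuous k}.
  apply: continuous_in_subspaceT => t; rewrite inE /= in_itv /= => t01.
  have [dkt _] := dk t t01.
  by apply: differentiable_continuous; exact/derivable1_diffP.
have [t] : exists2 t, t \in `]0, 1[ & k 1 - k 0 = (h' t - c - q * t) * (1 - 0).
  apply: MVT ltr01 _ ck => t; rewrite in_itv /= => /andP[t0 t1].
  by apply: dk; rewrite !ltW.
rewrite in_itv /= => t01 kE.
have : k 1 - k 0 <= 0.
  by rewrite kE subr0 mulr1; have := h'_le t t01; lra.
change (h 1 - c * 1 - q / 2 * (1 * 1) - (h 0 - c * 0 - q / 2 * (0 * 0)) <= 0 ->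
  h 1 <= h 0 + c + q / 2).
lra.
Qed.

Section PositivePart.
Variable R : realType.
Implicit Types u v C : R.

Lemma posp_ge0 u : 0 <= posp u.
Proof. by rewrite /posp le_max lexx orbT. Qed.

Lemma le_posp : {homo @posp R : u v / u <= v}.
Proof. by move=> u v uv; rewrite /posp le_max2. Qed.

Lemma posp_le u C : 0 <= C -> u <= C -> posp u <= C.
Proof. by move=> C0 uC; rewrite /posp ge_max uC C0. Qed.

Lemma mul_posp u : posp u * u = posp u ^+ 2.
Proof. by rewrite /posp maxEle; case: ifP => _; rewrite expr2 // !mul0r. Qed.

End PositivePart.

Section Descent.
Variables (R : realType) (d : nat) (S : set 'rV[R]_d) (f : 'rV[R]_d -> R) (L : R).
Hypothesis convexS : convex_set S.
Hypothesis df : forall y, S y -> differentiable f y.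
Hypothesis grad_lipschitz :
  forall y z, S y -> S z -> enorm (grad f y - grad f z) <= L * enorm (y - z).

Lemma descent_lemma y z : S y -> S z ->
  f z <= f y + dotp (grad f y) (z - y) + L / 2 * enorm (z - y) ^+ 2.
Proof.
move=> Sy Sz; set w := z - y.
have Syw (t : R) : 0 <= t <= 1 -> S (y + t *: w) by exact: convex_segment.
have := @increment_le_of_deriv_le R (fun t => f (y + t *: w))
  (fun t => dotp (grad f (y + t *: w)) w) (dotp (grad f y) w) (L * enorm w ^+ 2).
rewrite scale1r scale0r addr0 /w addrCA subrr addr0 -/w mulrAC; apply.
  by move=> t t01; apply/is_derive_line/df/Syw.
move=> t /andP[t0 t1]; rewrite -lerBlDl -dotpBl.
have Sywt : S (y + t *: w) by apply: Syw; rewrite !ltW.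
have := grad_lipschitz Sywt Sy; rewrite addrAC subrr add0r enormZ (ger0_norm (ltW t0)).
move=> /(ler_wpM2r (enorm_ge0 w)) lip; apply: le_trans (dotp_le _ _) _.
by apply: le_trans lip _; rewrite expr2; lra.
Qed.

Lemma fw_step_decrease y s (u C : R) : S y -> S s -> 0 < C ->
  L * enorm (s - y) ^+ 2 <= C -> enorm (grad f y) * enorm (s - y) <= C ->
  dotp (grad f y) (s - y) <= - u ->
  S (y + (posp u / C) *: (s - y)) /\
  posp u ^+ 2 <= 2 * C * (f y - f (y + (posp u / C) *: (s - y))).
Proof.
move=> Sy Ss C_gt0; set w := s - y; set a := posp u / C; set y' := y + a *: w.
move=> LwC gwC dir_le.
have a_ge0 : 0 <= a by rewrite divr_ge0 ?posp_ge0 ?ltW.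
have u_le_C : u <= C.
  by have := normr_dotp_le (grad f y) w; rewrite ler_norml => /andP[lo _]; lra.
have a_le1 : a <= 1 by rewrite ler_pdivrMr // mul1r posp_le // ltW.
have Sy' : S y' by apply: convex_segment; rewrite ?a_ge0.
split => //.
have := descent_lemma Sy Sy'.
have -> : y' - y = a *: w by rewrite /y' addrAC subrr add0r.
rewrite dotpZr enormZ ger0_norm // exprMn.
have aC : posp u = a * C by rewrite /a divfK ?gt_eqF.
have au : a * u = a ^+ 2 * C by rewrite /a mulrAC mul_posp aC; field; rewrite gt_eqF.
have adir : a * dotp (grad f y) w <= - (a * u) by rewrite -mulrN ler_wpM2l.
have aLw : a ^+ 2 * (L * enorm w ^+ 2) <= a ^+ 2 * C by rewrite ler_wpM2l ?sqr_ge0.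
move=> descent.
have decrease : a ^+ 2 * C <= 2 * (f y - f y') by lra.
rewrite aC; have := ler_wpM2l (ltW C_gt0) decrease; lra.
Qed.

End Descent.

Section InexactLinearOracle.
Variables (R : realType) (d : nat) (S : set 'rV[R]_d).
Variables (g g' : 'rV[R]_d -> 'rV[R]_d) (y s : 'rV[R]_d) (delta : R).
Hypothesis Ss : S s.
Hypothesis s_argmin : forall z, S z -> dotp (g' y) (s - y) <= dotp (g' y) (z - y).
Hypothesis g'_err :
  forall z, S z -> `|dotp (g y - g' y) (z - y)| <= delta * enorm (g y).

Lemma dotp_le_argmin z : S z -> dotp (g' y) (y - z) <= dotp (g' y) (y - s).
Proof.
move=> Sz; have := s_argmin Sz.
by rewrite -(opprB y s) -(opprB y z) !dotpNr lerN2.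
Qed.

Lemma fw_gap_argmin : fw_gap S g' y = dotp (g' y) (y - s).
Proof.
apply/le_anti/andP; split.
  apply: ge_sup; first by exists (dotp (g' y) (y - s)); exists s.
  by move=> _ [z Sz <-]; apply: dotp_le_argmin.
apply: ub_le_sup; last by exists s.
by exists (dotp (g' y) (y - s)) => _ [z Sz <-]; apply: dotp_le_argmin.
Qed.

Lemma dotp_dir_le_inexact_gap :
  dotp (g y) (s - y) <= - (fw_gap S g' y - delta * enorm (g y)).
Proof.
have := g'_err Ss; rewrite fw_gap_argmin dotpBl ler_norml => /andP[_ err].
by rewrite -(opprB s y) dotpNr; lra.
Qed.

Lemma fw_gap_le_inexact : fw_gap S g y <= fw_gap S g' y + delta * enorm (g y).
Proof.
apply: ge_sup; first by exists (dotp (g y) (y - s)); exists s.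
move=> _ [z Sz <-]; have := g'_err Sz; have := dotp_le_argmin Sz.
rewrite fw_gap_argmin dotpBl ler_norml -(opprB z y) !dotpNr => arg /andP[err _].
lra.
Qed.

End InexactLinearOracle.

Section Compactness.
Variables (R : realType) (d : nat).

Lemma compact_entries_bounded (S : set 'rV[R]_d) : compact S ->
  exists M : R, forall x, S x -> forall i, `|x ord0 i| <= M.
Proof.
move=> /compact_bounded [M [_ normS]].
exists (M + 1) => v Sv i.
apply: le_trans (normS (M + 1) _ v Sv); last by rewrite ltrDl.
rewrite [leRHS]/Num.norm /= mx_normrE; apply/bigmax_geP; right => /=.
by exists (ord0, i).
Qed.

Lemma enorm_le_diam (S : set 'rV[R]_d) a b : compact S -> S a -> S b ->
  enorm (a - b) <= diam S.
Proof.
move=> /compact_entries_bounded [M SM] Sa Sb.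
apply: ub_le_sup; last by exists a => //; exists b.
exists (Num.sqrt (\sum_(i < d) (2 * M) ^+ 2)) => _ [p Sp [q Sq <-]].
rewrite /enorm ler_sqrt; last by apply: sumr_ge0 => i _; rewrite sqr_ge0.
apply: ler_sum => i _; rewrite mxE -expr2.
have := SM p Sp i; have := SM q Sq i.
rewrite !mxE !ler_norml => /andP[? ?] /andP[? ?]; nra.
Qed.

End Compactness.

Lemma continuous_compact_has_lbound (R : realType) (T : topologicalType)
    (S : set T) (f : T -> R) :
  compact S -> {within S, continuous f} -> has_lbound (f @` S).
Proof.
move=> cS cf; have /compact_bounded [M [_ fSM]] := continuous_compact cf cS.
exists (- (M + 1)) => _ [y Sy <-].
have : `|f y| <= M + 1 by apply: fSM; [rewrite ltrDl | exists y].
by rewrite ler_norml => /andP[].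
Qed.

Lemma sum_le_telescope (R : realDomainType) (b c : nat -> R) n :
  (forall k, b k <= c k - c k.+1) -> \sum_(k < n) b k <= c 0%N - c n.
Proof.
move=> bc; elim: n => [|n IH]; first by rewrite big_ord0 subrr.
by rewrite big_ord_recr /=; have := bc n; lra.
Qed.

Lemma bigmin_le_sqrt_mean (R : realType) (v a : nat -> R) (B : R) K :
  (forall k, 0 <= v k) -> (forall k, v k <= a k) ->
  \sum_(k < K.+1) a k ^+ 2 <= B ->
  \big[Num.min/v 0%N]_(k < K.+1) v k <= Num.sqrt (B / K.+1%:R).
Proof.
move=> v_ge0 va sumB; set m := \big[Num.min/v 0%N]_(k < K.+1) v k.
have m_ge0 : 0 <= m by elim/big_ind: m => // b c b0 c0; rewrite le_min b0 c0.
have m_le (k : 'I_K.+1) : m <= a k.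
  by apply: le_trans (va k); rewrite /m (bigD1 k) //= ge_min lexx.
have mB : K.+1%:R * m ^+ 2 <= B.
  apply: le_trans sumB.
  have -> : K.+1%:R * m ^+ 2 = \sum_(k < K.+1) m ^+ 2 by rewrite sumr_const card_ord mulr_natl.
  by apply: ler_sum => k _; rewrite ler_sqr ?nnegrE ?m_le // (le_trans m_ge0).
have B_ge0 : 0 <= B by apply: le_trans mB; rewrite mulr_ge0 ?sqr_ge0.
by rewrite -(ger0_norm m_ge0) -sqrtr_sqr ler_sqrt ?divr_ge0 // ler_pdivlMr // mulrC.
Qed.

Unset Implicit Arguments.

Theorem theorem3 (R : realType) (d : nat) (S : set 'rV[R]_d)
  (f : 'rV[R]_d -> R) (L C delta : R)
  (gdelta : 'rV[R]_d -> 'rV[R]_d) (x s : nat -> 'rV[R]_d) :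
  S !=set0 -> compact S -> convex_set S ->
  (forall y, S y -> differentiable f y) ->
  0 <= L ->
  (forall y z, S y -> S z -> enorm (grad f y - grad f z) <= L * enorm (y - z)) ->
  has_ubound [set enorm (grad f y) | y in S] ->
  let D := diam S in
  let G := sup [set enorm (grad f y) | y in S] in
  let fstar := inf [set f y | y in S] in
  0 < C -> Num.max (L * D ^+ 2) (G * D) <= C ->
  0 <= delta ->
  (forall y, S y -> forall z, S z ->
     `| dotp (grad f y - gdelta y) (z - y) | <= delta * enorm (grad f y)) ->
  S (x 0%N) ->
  (forall k, S (s k) /\
     forall z, S z -> dotp (gdelta (x k)) (s k - x k) <= dotp (gdelta (x k)) (z - x k)) ->
  (forall k, x k.+1 = x k +
     (posp (fw_gap S gdelta (x k) - delta * enorm (grad f (x k))) / C) *: (s k - x k)) ->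
  forall K : nat,
    let v := fun k => posp (fw_gap S (grad f) (x k) - 2 * delta * enorm (grad f (x k))) in
    \big[Num.min/v 0%N]_(k < K.+1) v k
      <= Num.sqrt (2 * C * (f (x 0%N) - fstar) / K.+1%:R).
Proof.
move=> _ cptS cvxS df L_ge0 grad_lip G_ub D G fstar C_gt0 C_ge _ oracle Sx0 s_argmin
  x_succ K.
(* the [let v] of the statement lives inside a boolean, so it cannot be introduced *)
pose v k := posp (fw_gap S (grad f) (x k) - 2 * delta * enorm (grad f (x k))).
change (\big[Num.min/v 0%N]_(k < K.+1) v k
  <= Num.sqrt (2 * C * (f (x 0%N) - fstar) / K.+1%:R)).
move: C_ge; rewrite ge_max => /andP[LD2_le GD_le].
have G_ge y : S y -> enorm (grad f y) <= G by move=> Sy; apply: ub_le_sup => //; exists y.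
pose a k := posp (fw_gap S gdelta (x k) - delta * enorm (grad f (x k))).
have step k : S (x k) -> S (x k.+1) /\ a k ^+ 2 <= 2 * C * (f (x k) - f (x k.+1)).
  move=> Sxk; have [Ssk sk_argmin] := s_argmin k; rewrite x_succ.
  have w_le : enorm (s k - x k) <= D by exact: enorm_le_diam.
  apply: (fw_step_decrease cvxS df grad_lip) => //.
  - apply: le_trans LD2_le; rewrite ler_wpM2l // ler_sqr ?nnegrE ?enorm_ge0 //.
    exact: le_trans (enorm_ge0 _) w_le.
  - by apply: le_trans GD_le; apply: ler_pM; rewrite ?enorm_ge0 ?G_ge.
  - by apply: dotp_dir_le_inexact_gap => // z; apply: oracle.
have Sx k : S (x k) by elim: k => // k IH; have [] := step k IH.
have fstar_le y : S y -> fstar <= f y.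
  move=> Sy; apply: ge_inf; last by exists y.
  apply: continuous_compact_has_lbound cptS _; apply: continuous_in_subspaceT => z.
  by rewrite inE => Sz; apply: differentiable_continuous; apply: df.
apply: (@bigmin_le_sqrt_mean _ v a) => [k|k|]; first exact: posp_ge0.
  apply: le_posp; have [Ssk sk_argmin] := s_argmin k.
  have := fw_gap_le_inexact Ssk sk_argmin (oracle _ (Sx k)); lra.
apply: le_trans (@sum_le_telescope _ (fun k => a k ^+ 2) (fun k => 2 * C * f (x k)) _ _) _.
  by move=> k; rewrite -mulrBr; have [] := step k (Sx k).
by rewrite -mulrBr ler_wpM2l ?lerD2l ?lerN2 ?fstar_le // mulr_ge0 // ltW.
Qed.
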